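(* Let $q$ be an odd prime power with $q\equiv 1\pmod 4$, let $n$ be an even positive integer with $\gcd(n,q)=1$, and let $\lambda\in\mathrm{GF}(q)^*$ satisfy $\lambda^2=-1$. In the ring $R=\mathrm{GF}(q)[x]/(x^n+1)$ put $e_1(x)=\frac{\lambda}{2}(x^{n/2}-\lambda)$ and $e_2(x)=-\frac{\lambda}{2}(x^{n/2}+\lambda)$. Let $\mathcal{C}$ be a $q$-ary negacyclic code of length $n$ with generator polynomial $g(x)$, and define $$\mathrm{Res}_1(\mathcal{C})=\{c(x) \bmod (x^{n/2}+\lambda): c(x)\in\mathcal{C}\},\qquad \mathrm{Res}_2(\mathcal{C})=\{c(x) \bmod (x^{n/2}-\lambda): c(x)\in\mathcal{C}\},$$ viewed as $q$-ary linear codes of length $n/2$. Then $$\mathcal{C}=\{e_1(x)c_1(x)+e_2(x)c_2(x): c_1(x)\in \mathrm{Res}_1(\mathcal{C}),\ c_2(x)\in\mathrm{Res}_2(\mathcal{C})\}.$$ Furthermore: (1) $\mathrm{Res}_1(\mathcal{C})$ is the $q$-ary $(-\lambda)$-constacyclic code of length $n/2$ with generator polynomial $g_1(x)=\gcd(g(x),x^{n/2}+\lambda)$; (2) $\mathrm{Res}_2(\mathcal{C})$ is the $q$-ary $\lambda$-constacyclic code of length $n/2$ with generator polynomial $g_2(x)=\gcd(g(x),x^{n/2}-\lambda)$; (3) $\dim(\mathcal{C})=\dim(\mathrm{Res}_1(\mathcal{C}))+\dim(\mathrm{Res}_2(\mathcal{C}))$; (4) if $(x^{n/2}-\lambda)\mid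 g(x)$, then $d(\mathcal{C})=2\, d(\mathrm{Res}_1(\mathcal{C}))$; (5) if $(x^{n/2}+\lambda)\mid g(x)$, then $d(\mathcal{C})=2\, d(\mathrm{Res}_2(\mathcal{C}))$; (6) if $(x^{n/2}-\lambda)\nmid g(x)$ and $(x^{n/2}+\lambda)\nmid g(x)$, write $d_i=d(\mathrm{Res}_i(\mathcal{C}))$; then $d(\mathcal{C})=2\min\{d_1,d_2\}$ provided $2\min\{d_1,d_2\}\le \max\{d_1,d_2\}$, and $\max\{d_1,d_2\}\le d(\mathcal{C})\le 2\min\{d_1,d_2\}$ provided $2\min\{d_1,d_2\}>\max\{d_1,d_2\}$.
   Context: For $\mu\in\mathrm{GF}(q)^*$, a $q$-ary linear code of length $N$ is $\mu$-constacyclic if it is closed under $(c_0,\dots,c_{N-1})\mapsto(\mu c_{N-1},c_0,\dots,c_{N-2})$; identifying $(c_0,\dots,c_{N-1})$ with $c_0+c_1x+\dots+c_{N-1}x^{N-1}$, such codes are exactly the ideals of $\mathrm{GF}(q)[x]/(x^N-\mu)$. Negacyclic means $(-1)$-constacyclic. The generator polynomial of a constacyclic code is the monic polynomial of least degree generating the ideal (a divisor of $x^N-\mu$). Codewords of $\mathcal{C}$ are represented by polynomials of degree $<n$, and $c(x) \bmod (x^{n/2}\pm\lambda)$ denotes the remainder of degree $<n/2$. $d(\cdot)$ denotes minimum Hamming distance. *)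

From HB Require Import structures.
From mathcomp Require Import all_boot all_order all_algebra.
Set Implicit Arguments. Unset Strict Implicit. Unset Printing Implicit Defensive.
Import GRing.Theory.
Local Open Scope ring_scope.

(* Codewords of length N over F are row vectors 'rV[F]_N, identified with
   polynomials of degree < N via rVpoly / poly_rV (coefficient i = entry i). *)

Definition cmod (F : fieldType) (N : nat) (mu : F) : {poly F} := 'X^N - mu%:P.

(* The ideal of F[x]/(x^N - mu) generated by g, elements of the ring being
   represented by their reduced representatives (row vectors of length N). *)
Definition ideal_gen (F : finFieldType) (N : nat) (mu : F) (g : {poly F})
  : {set 'rV[F]_N} :=
  [set poly_rV ((g * rVpoly a) %% cmod N mu) | a : 'rV[F]_N].

Definition is_gen_poly (F : finFieldType) (N : nat) (mu : F)
  (C : {set 'rV[F]_N}) (g : {poly F}) : Prop :=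
  [/\ g \is monic, C = ideal_gen N mu g &
      forall h : {poly F}, h \is monic -> ideal_gen N mu h = C ->
        (size g <= size h)%N].

Definition Res (F : finFieldType) (N M : nat) (m : {poly F})
  (C : {set 'rV[F]_N}) : {set 'rV[F]_M} :=
  [set poly_rV (rVpoly c %% m) | c in C].

Definition mgcd (F : fieldType) (p q : {poly F}) : {poly F} :=
  (lead_coef (gcdp p q))^-1 *: gcdp p q.

Definition cdim (F : finFieldType) (N : nat) (C : {set 'rV[F]_N}) : nat :=
  \dim (<<enum C>>)%VS.

Definition wt (F : finFieldType) (N : nat) (v : 'rV[F]_N) : nat :=
  #|[set i : 'I_N | v 0 i != 0]|.

(* minimum Hamming distance (= minimum nonzero weight for linear codes);
   convention: the zero code of length N has distance N *)
Definition mindist (F : finFieldType) (N : nat) (C : {set 'rV[F]_N}) : nat :=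
  \big[minn/N]_(c in C | c != 0) wt c.

Arguments cmod {F} N mu.
Arguments ideal_gen {F} N mu g.
Arguments is_gen_poly {F} N mu C g.
Arguments Res {F N} M m C.
Arguments mgcd {F} p q.
Arguments cdim {F N} C.
Arguments wt {F N} v.
Arguments mindist {F N} C.

From HB Require Import structures.
From mathcomp Require Import all_boot all_order all_algebra all_fingroup.
From mathcomp Require Import cyclic finfield ring zify.
Set Implicit Arguments. Unset Strict Implicit. Unset Printing Implicit Defensive.
Import GRing.Theory.
Local Open Scope ring_scope.

(* Since lam^2 = -1, x^n + 1 = (x^m + lam)(x^m - lam) with m = n/2, and e1, e2 are the
   idempotents of the corresponding Chinese remainder splitting (e1 + e2 = 1, e1 vanishes
   modulo x^m + lam and e2 modulo x^m - lam).  Hence every c in C is e1 c1 + e2 c2 with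
   c_i its residues, and the residue codes are the ideals generated by g modulo each
   factor, whose generators are the gcds.  Moreover e1 c1 + e2 c2 = (c1 + c2)/2 +
   x^m lam (c1 - c2)/2, so up to scaling its two halves a codeword is the Plotkin-type
   word (c1 + c2 | c1 - c2).  Its weight wt (c1 + c2) + wt (c1 - c2) is 2 wt c_i when the
   other residue vanishes and, as 2 is invertible, at least max (wt c1) (wt c2)
   otherwise; this gives the dimension and all the distance statements. *)

Lemma odd_card_two_neq0 (F : finFieldType) : odd #|F| -> (2 : F) != 0.
Proof.
apply: contraTneq => two0.
have o1 : #[1%R : F]%g = 2%N.
  apply/prime_nt_dvdP => //; first by rewrite order_eq1 oner_eq0.
  by rewrite order_dvdn; apply/eqP.
by rewrite -dvdn2 -o1 -cardsT order_dvdG ?inE.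
Qed.

Lemma neq0_addsub (F : fieldType) (x y : F) :
  (2 : F) != 0 -> x != 0 -> (x + y != 0) || (x - y != 0).
Proof.
move=> two0; rewrite -negb_and; apply: contra => /andP[/eqP xy0 /eqP x_y0].
have : x * 2 = (x + y) + (x - y) by rewrite mulr_natr mulr2n addrACA subrr addr0.
by rewrite xy0 x_y0 addr0 => /eqP; rewrite mulf_eq0 (negbTE two0) orbF.
Qed.

Section Weight.
Variables (F : finFieldType) (N : nat).
Implicit Types (u v : 'rV[F]_N) (a : F).

Lemma wtE v : wt v = (\sum_(i < N) (v 0%R i != 0%R))%N.
Proof. by rewrite /wt -sum1_card big_mkcond; apply: eq_bigr => i _; rewrite inE. Qed.

Lemma wt_leN v : (wt v <= N)%N.
Proof. by rewrite /wt -[leqRHS]card_ord max_card. Qed.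

Lemma wt_eq0 v : (wt v == 0%N) = (v == 0).
Proof.
rewrite wtE sum_nat_eq0; apply/forallP/eqP => [v0|-> i]; last by rewrite mxE eqxx.
by apply/rowP => i; rewrite mxE; apply/eqP; have := v0 i; rewrite eqb0 negbK.
Qed.

Lemma wtZ a v : a != 0 -> wt (a *: v) = wt v.
Proof.
by move=> a0; rewrite !wtE; apply: eq_bigr => i _; rewrite mxE mulf_eq0 (negbTE a0).
Qed.

Lemma wtN v : wt (- v) = wt v.
Proof. by rewrite -scaleN1r wtZ ?oppr_eq0 ?oner_eq0. Qed.

Lemma wt_le_addsub u v : (2 : F) != 0 -> (wt u <= wt (u + v) + wt (u - v))%N.
Proof.
move=> two0; rewrite !wtE -big_split /=; apply: leq_sum => i _; rewrite !mxE.
have [//|ui0] := eqVneq (u 0 i) 0.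
by case/orP: (neq0_addsub (v 0 i) two0 ui0) => ->; rewrite ?leq_addr ?leq_addl.
Qed.

End Weight.

Lemma wt_row_mx (F : finFieldType) m k (u : 'rV[F]_m) (v : 'rV[F]_k) :
  wt (row_mx u v) = (wt u + wt v)%N.
Proof.
rewrite !wtE big_split_ord /=.
by congr addn; apply: eq_bigr => i _; rewrite (row_mxEl, row_mxEr).
Qed.

Section MinimumDistance.
Variables (F : finFieldType) (N : nat) (S : {set 'rV[F]_N}).

Lemma mindist_le c : c \in S -> c != 0 -> (mindist S <= wt c)%N.
Proof.
move=> cS c0; rewrite /mindist.
elim: (index_enum _) (mem_index_enum c) => // x r IHr; rewrite inE big_cons.
case/predU1P => [<-|/IHr le_r]; first by rewrite cS c0 geq_minl.
by case: ifP => // _; rewrite geq_min le_r orbT.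
Qed.

Lemma mindist_leN : (mindist S <= N)%N.
Proof.
apply: (big_ind (fun d => d <= N)%N) => // [d d' dN _|c _]; first by rewrite geq_min dN.
exact: wt_leN.
Qed.

Lemma mindist_ge k :
  (k <= N)%N -> (forall c, c \in S -> c != 0 -> (k <= wt c)%N) -> (k <= mindist S)%N.
Proof.
move=> kN k_wt; apply: (big_ind (fun d => k <= d)%N) => // [d d' kd kd'|c /andP[]].
  by rewrite leq_min kd.
exact: k_wt.
Qed.

Lemma mindist_attained :
  mindist S = N \/ exists c, [/\ c \in S, c != 0 & wt c = mindist S].
Proof.
pose P d := d = N \/ exists2 c, (c \in S) && (c != 0) & wt c = d.
have : P (mindist S).
  by apply: big_ind => [|x y|c cS]; [left|rewrite /minn; case: ifP|right; exists c].
by case=> [|[c /andP[cS c0] <-]]; [left|right; exists c].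
Qed.

End MinimumDistance.

Lemma card_submod_closed (F : finFieldType) N (S : {set 'rV[F]_N}) :
  submod_closed S -> #|S| = (#|F| ^ cdim S)%N.
Proof.
move=> [S0 S_lin]; rewrite /cdim -card_vspace; apply: eq_card => v.
apply/idP/idP => [vS|]; first by apply: memv_span; rewrite mem_enum.
have : {subset enum S <= S} by move=> u; rewrite mem_enum.
elim: (enum S) v => [|u s IHs] v sS; first by rewrite span_nil memv0 => /eqP->.
rewrite span_cons => /memv_addP[_ /vlineP[a ->] [w ws ->]].
by apply: S_lin; rewrite ?(sS u) ?mem_head // IHs // => x xs; rewrite sS // inE xs orbT.
Qed.

Lemma rVpoly_row_mx (R : nzRingType) m k (u : 'rV[R]_m) (v : 'rV[R]_k) :
  rVpoly (row_mx u v) = rVpoly u + 'X^m * rVpoly v.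
Proof.
apply/polyP => i; rewrite coefD coefXnM !coef_rVpoly.
have [lt_im | le_mi] := ltnP i m.
  have lt_imk : (i < m + k)%N by rewrite ltn_addr.
  rewrite !insubT addr0 /= -(row_mxEl u v 0 (Ordinal lt_im)).
  by congr (row_mx u v 0 _); apply: val_inj.
have [lt_imk | le_mki] := ltnP i (m + k).
  have lt_ik : (i - m < k)%N by rewrite ltn_subLR.
  rewrite insubT insubF ?ltnNge ?le_mi // insubT add0r /= -(row_mxEr u v 0 (Ordinal lt_ik)).
  by congr (row_mx u v 0 _); apply: val_inj; rewrite /= subnKC.
have le_ki : (k <= i - m)%N by rewrite leq_subRL.
by rewrite !insubF ?add0r // ltnNge ?le_ki ?le_mi ?le_mki.
Qed.

Lemma cmodN (F : fieldType) N (mu : F) : cmod N (- mu) = 'X^N + mu%:P.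
Proof. by rewrite /cmod polyCN opprK. Qed.

Lemma modp_dvd (F : fieldType) (p q x : {poly F}) : q %| p -> (x %% p) %% q = x %% q.
Proof.
by move=> q_p; rewrite [in RHS](divp_eq x p) modpD (modp_eq0 (dvdp_mull _ q_p)) add0r.
Qed.

Lemma modp_mul_mod (F : fieldType) (e p q x : {poly F}) :
  q %| e * p -> (e * (x %% p)) %% q = (e * x) %% q.
Proof.
move=> q_ep; rewrite [in RHS](divp_eq x p) mulrDr modpD mulrCA.
by rewrite (modp_eq0 (dvdp_mull _ q_ep)) add0r.
Qed.

Section Mgcd.
Variables (F : fieldType) (p q : {poly F}).
Hypothesis q_neq0 : q != 0.

Let lc_gcd_neq0 : lead_coef (gcdp p q) != 0.
Proof. by rewrite lead_coef_eq0 gcdp_eq0 negb_and q_neq0 orbT. Qed.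

Lemma mgcd_monic : mgcd p q \is monic.
Proof. by rewrite monicE /mgcd lead_coefZ mulVf. Qed.

Lemma mgcd_eqp : mgcd p q %= gcdp p q.
Proof. by rewrite /mgcd eqp_scale ?invr_eq0. Qed.

Lemma mgcd_dvdl : mgcd p q %| p.
Proof. by rewrite (eqp_dvdl _ mgcd_eqp) dvdp_gcdl. Qed.

Lemma mgcd_dvdr : mgcd p q %| q.
Proof. by rewrite (eqp_dvdl _ mgcd_eqp) dvdp_gcdr. Qed.

Lemma mgcd_Bezout : exists u v, mgcd p q = u * p + v * q.
Proof.
have [[u v] /=] := Bezoutp p q; rewrite eqp_sym -(eqp_ltrans mgcd_eqp).
case/eqpP => [[c d] /= /andP[c0 d0] e].
exists ((c^-1 * d) *: u), ((c^-1 * d) *: v).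
by rewrite -!scalerAl -scalerDr -scalerA -e scalerA mulVf ?scale1r.
Qed.

End Mgcd.

Section ConstacyclicIdeal.
Variables (F : finFieldType) (N : nat) (mu : F).
Hypothesis N_gt0 : (0 < N)%N.

Lemma cmod_neq0 : cmod N mu != 0.
Proof. by rewrite -size_poly_eq0 size_XnsubC. Qed.

Lemma size_modp_cmod (p : {poly F}) : (size (p %% cmod N mu)%R <= N)%N.
Proof. by rewrite -ltnS -(size_XnsubC mu N_gt0) ltn_modp cmod_neq0. Qed.

Lemma ideal_genP h v :
  v \in ideal_gen N mu h <-> exists y, v = poly_rV ((h * y) %% cmod N mu).
Proof.
split=> [/imsetP[a _ ->]|[y ->]]; first by exists (rVpoly a).
apply/imsetP; exists (poly_rV (y %% cmod N mu)) => //.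
by rewrite poly_rV_K ?size_modp_cmod // modp_mul.
Qed.

Lemma ideal_gen_submod_closed h : submod_closed (ideal_gen N mu h).
Proof.
split=> [|a u v /ideal_genP[y ->] /ideal_genP[z ->]]; apply/ideal_genP.
  by exists 0; rewrite mulr0 mod0p linear0.
by exists (a *: y + z); rewrite mulrDr -scalerAr modpD modpZl linearD linearZ.
Qed.

Lemma ideal_gen_mgcd g : ideal_gen N mu g = ideal_gen N mu (mgcd g (cmod N mu)).
Proof.
apply/setP => v; apply/idP/idP => /ideal_genP[y ->]; apply/ideal_genP.
  have /dvdpP[k gE] := mgcd_dvdl g cmod_neq0.
  by exists (k * y); rewrite {1}gE mulrCA mulrA.
have [u [w ->]] := mgcd_Bezout g cmod_neq0.
exists (u * y); rewrite mulrDl modpD -mulrA [w * _ * _]mulrAC modp_mull addr0.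
by rewrite mulrCA mulrA.
Qed.

Lemma ideal_gen_eq0 h : cmod N mu %| h -> ideal_gen N mu h = [set 0].
Proof.
move=> dvd_h; apply/setP => v; rewrite inE; apply/imsetP/eqP => [[a _ ->]|->].
  by rewrite modp_eq0 ?dvdp_mulr ?linear0.
by exists 0; rewrite // linear0 mulr0 mod0p linear0.
Qed.

Lemma is_gen_poly_ideal_gen h :
  h \is monic -> h %| cmod N mu -> is_gen_poly N mu (ideal_gen N mu h) h.
Proof.
move=> h_monic h_dvd; split=> // k k_monic ideal_k.
have : poly_rV (k %% cmod N mu) \in ideal_gen N mu k.
  by apply/ideal_genP; exists 1; rewrite mulr1.
rewrite ideal_k => /ideal_genP[y /(congr1 rVpoly)].
rewrite !poly_rV_K ?size_modp_cmod // => k_hy.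
have h_k : h %| k.
  rewrite (divp_eq k (cmod N mu)) dvdp_addr ?dvdp_mull // k_hy.
  by rewrite -dvdp_mod // dvdp_mulr.
exact: dvdp_leq (monic_neq0 k_monic) h_k.
Qed.

Lemma is_gen_poly_mgcd g :
  is_gen_poly N mu (ideal_gen N mu g) (mgcd g (cmod N mu)).
Proof.
rewrite ideal_gen_mgcd; apply: is_gen_poly_ideal_gen.
  exact: mgcd_monic cmod_neq0.
exact: mgcd_dvdr cmod_neq0.
Qed.

End ConstacyclicIdeal.

Lemma Res_ideal_gen (F : finFieldType) N K (mu nu : F) g :
  (0 < N)%N -> (0 < K)%N -> cmod K nu %| cmod N mu ->
  Res K (cmod K nu) (ideal_gen N mu g) = ideal_gen K nu g.
Proof.
move=> N_gt0 K_gt0 dvd_mod; apply/setP => v; apply/idP/idP.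
  case/imsetP => c /(ideal_genP _ N_gt0)[y ->] ->; apply/ideal_genP => //.
  by exists y; rewrite poly_rV_K ?modp_dvd ?size_modp_cmod.
case/(ideal_genP _ K_gt0) => y ->; apply/imsetP.
exists (poly_rV ((g * y) %% cmod N mu)); first by apply/ideal_genP => //; exists y.
by rewrite poly_rV_K ?modp_dvd ?size_modp_cmod.
Qed.

Section PlusMinusConstruction.
Variables (F : finFieldType) (m : nat) (a b : F).

Definition pm_word (u1 u2 : 'rV[F]_m) : 'rV[F]_(m + m) :=
  row_mx (a *: (u1 + u2)) (b *: (u1 - u2)).

Definition pm_code (R1 R2 : {set 'rV[F]_m}) : {set 'rV[F]_(m + m)} :=
  [set pm_word u1 u2 | u1 in R1, u2 in R2].

Hypotheses (a_neq0 : a != 0) (b_neq0 : b != 0) (two_neq0 : (2 : F) != 0).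

Lemma wt_pm_word u1 u2 : wt (pm_word u1 u2) = (wt (u1 + u2) + wt (u1 - u2))%N.
Proof. by rewrite wt_row_mx !wtZ. Qed.

Lemma wt_pm_wordl u : wt (pm_word u 0) = (2 * wt u)%N.
Proof. by rewrite wt_pm_word addr0 subr0 mul2n addnn. Qed.

Lemma wt_pm_wordr u : wt (pm_word 0 u) = (2 * wt u)%N.
Proof. by rewrite wt_pm_word add0r sub0r wtN mul2n addnn. Qed.

Lemma wt_le_pm_word u1 u2 : (maxn (wt u1) (wt u2) <= wt (pm_word u1 u2))%N.
Proof.
rewrite wt_pm_word geq_max wt_le_addsub //=.
by rewrite [u1 + u2]addrC -[u1 - u2]opprB wtN wt_le_addsub.
Qed.

Lemma pm_word_eq0 u1 u2 : (pm_word u1 u2 == 0) = (u1 == 0) && (u2 == 0).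
Proof.
apply/idP/andP => [|[/eqP-> /eqP->]]; last by rewrite /pm_word subr0 addr0 !scaler0 row_mx0.
rewrite -wt_eq0 -leqn0 => /(leq_trans (wt_le_pm_word u1 u2)).
by rewrite geq_max !leqn0 !wt_eq0 => /andP.
Qed.

Lemma pm_wordB u1 u2 v1 v2 :
  pm_word (u1 - v1) (u2 - v2) = pm_word u1 u2 - pm_word v1 v2.
Proof.
rewrite /pm_word opp_row_mx add_row_mx -!scalerBr.
by congr (row_mx (a *: _) (b *: _)); rewrite !opprD ?opprK addrACA.
Qed.

Lemma pm_word_inj u1 u2 v1 v2 : pm_word u1 u2 = pm_word v1 v2 -> u1 = v1 /\ u2 = v2.
Proof.
move/eqP; rewrite -subr_eq0 -pm_wordB pm_word_eq0 !subr_eq0.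
by case/andP => /eqP-> /eqP->.
Qed.

Variables (R1 R2 : {set 'rV[F]_m}).
Local Notation C := (pm_code R1 R2).
Local Notation d1 := (mindist R1).
Local Notation d2 := (mindist R2).

Lemma card_pm_code : #|C| = (#|R1| * #|R2|)%N.
Proof.
rewrite /pm_code curry_imset2X card_imset ?cardsX // => [[u1 u2] [v1 v2]] /=.
by case/pm_word_inj => -> ->.
Qed.

Lemma mindist_pm_code_le1 : 0 \in R2 -> (mindist C <= 2 * d1)%N.
Proof.
move=> R2_0; have [->|[u [uR u0 <-]]] := mindist_attained R1.
  by rewrite mul2n -addnn mindist_leN.
by rewrite -wt_pm_wordl mindist_le ?imset2_f // pm_word_eq0 negb_and u0.
Qed.

Lemma mindist_pm_code_le2 : 0 \in R1 -> (mindist C <= 2 * d2)%N.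
Proof.
move=> R1_0; have [->|[u [uR u0 <-]]] := mindist_attained R2.
  by rewrite mul2n -addnn mindist_leN.
by rewrite -wt_pm_wordr mindist_le ?imset2_f // pm_word_eq0 negb_and u0 orbT.
Qed.

Lemma mindist_pm_code_ge : (minn (2 * minn d1 d2) (maxn d1 d2) <= mindist C)%N.
Proof.
have le_d1 := mindist_leN R1; have le_d2 := mindist_leN R2.
apply: mindist_ge => [|_ /imset2P[u1 u2 u1R u2R ->]]; first lia.
rewrite pm_word_eq0 negb_and.
have [->|u20] := eqVneq u2 0.
  by rewrite orbF wt_pm_wordl => u10; have := mindist_le u1R u10; lia.
have [-> _|u10 _] := eqVneq u1 0.
  by rewrite wt_pm_wordr; have := mindist_le u2R u20; lia.
have := wt_le_pm_word u1 u2; have := mindist_le u1R u10; have := mindist_le u2R u20.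
lia.
Qed.

Lemma mindist_pm_code_zero2 : R2 = [set 0] -> mindist C = (2 * d1)%N.
Proof.
move=> R2E; have R2_0 : 0 \in R2 by rewrite R2E set11.
apply/eqP; rewrite eqn_leq mindist_pm_code_le1 //=.
apply: mindist_ge => [|c /imset2P[u1 u2 u1R]].
  by rewrite mul2n -addnn leq_add ?mindist_leN.
rewrite [in u2 \in _]R2E inE => /eqP-> ->; rewrite pm_word_eq0 eqxx andbT => u10.
by rewrite wt_pm_wordl leq_mul2l mindist_le.
Qed.

Lemma mindist_pm_code_zero1 : R1 = [set 0] -> mindist C = (2 * d2)%N.
Proof.
move=> R1E; have R1_0 : 0 \in R1 by rewrite R1E set11.
apply/eqP; rewrite eqn_leq mindist_pm_code_le2 //=.
apply: mindist_ge => [|c /imset2P[u1 u2 + u2R ->]].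
  by rewrite mul2n -addnn leq_add ?mindist_leN.
rewrite [in u1 \in _]R1E inE => /eqP->; rewrite pm_word_eq0 eqxx /= => u20.
by rewrite wt_pm_wordr leq_mul2l mindist_le.
Qed.

Lemma mindist_pm_code_bounds : 0 \in R1 -> 0 \in R2 ->
  ((2 * minn d1 d2 <= maxn d1 d2)%N -> mindist C = (2 * minn d1 d2)%N) /\
  ((maxn d1 d2 < 2 * minn d1 d2)%N -> (maxn d1 d2 <= mindist C <= 2 * minn d1 d2)%N).
Proof.
move=> R1_0 R2_0; have := mindist_pm_code_ge.
have := mindist_pm_code_le1 R2_0; have := mindist_pm_code_le2 R1_0.
by move=> *; split=> ?; [|apply/andP; split]; lia.
Qed.

End PlusMinusConstruction.

Section NegacyclicDecomposition.
Variables (F : finFieldType) (m : nat) (lam : F) (g : {poly F}).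
Hypotheses (m_gt0 : (0 < m)%N) (two_neq0 : (2 : F) != 0) (lam2 : lam ^+ 2 = -1).

Local Notation P := ('X^m + lam%:P).
Local Notation Q := ('X^m - lam%:P).
Local Notation M := ('X^(m + m) + 1 : {poly F}).
Local Notation e1 := ((lam / 2)%:P * ('X^m - lam%:P)).
Local Notation e2 := ((- (lam / 2))%:P * ('X^m + lam%:P)).
Local Notation C := (ideal_gen (m + m) (-1) g).
Local Notation R1 := (Res m ('X^m + lam%:P) C).
Local Notation R2 := (Res m ('X^m - lam%:P) C).

Let mm_gt0 : (0 < m + m)%N. Proof. by rewrite addn_gt0 m_gt0. Qed.

Let cmodM : cmod (m + m) (-1) = M.
Proof. by rewrite cmodN polyC1. Qed.

Lemma mulPQ : P * Q = M.
Proof.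
have lamP2 : lam%:P * lam%:P = -1 :> {poly F} by rewrite -polyCM -expr2 lam2 polyCN polyC1.
by rewrite exprD; ring: lamP2.
Qed.

Let half_lamP : (lam / 2)%:P * lam%:P = - (2^-1)%:P :> {poly F}.
Proof. by rewrite -polyCM -polyCN mulrAC -expr2 lam2 mulN1r. Qed.

Let halfP : (2^-1)%:P * 2 = 1 :> {poly F}.
Proof. by rewrite -polyC_natr -polyCM mulVf. Qed.

Lemma e1_add_e2 : e1 + e2 = 1.
Proof. by ring: half_lamP halfP. Qed.

Lemma e1_e2_split a b :
  e1 * a + e2 * b = (2^-1)%:P * (a + b) + 'X^m * ((lam / 2)%:P * (a - b)).
Proof. by ring: half_lamP. Qed.

Lemma e1_e2_pm_word (u1 u2 : 'rV[F]_m) :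
  poly_rV ((e1 * rVpoly u1 + e2 * rVpoly u2) %% M) = pm_word (2^-1) (lam / 2) u1 u2.
Proof.
rewrite e1_e2_split !mul_polyC -!linearD -!linearB -!linearZ -rVpoly_row_mx.
by rewrite modp_small ?rVpolyK // -cmodM size_XnsubC // ltnS size_poly.
Qed.

Lemma P_dvd_M : P %| M. Proof. by rewrite -mulPQ dvdp_mulr. Qed.
Lemma Q_dvd_M : Q %| M. Proof. by rewrite -mulPQ dvdp_mull. Qed.

Lemma Res_P_ideal : R1 = ideal_gen m (- lam) g.
Proof. by rewrite -cmodN Res_ideal_gen // cmodN cmodM P_dvd_M. Qed.

Lemma Res_Q_ideal : R2 = ideal_gen m lam g.
Proof. by rewrite Res_ideal_gen // cmodM Q_dvd_M. Qed.

Let M_dvd_e1P : M %| e1 * P.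
Proof. by rewrite -mulrA [_ * P]mulrC mulPQ dvdp_mull. Qed.

Let M_dvd_e2Q : M %| e2 * Q.
Proof. by rewrite -mulrA mulPQ dvdp_mull. Qed.

Let size_modP (p : {poly F}) : (size (p %% P)%R <= m)%N.
Proof. by rewrite -cmodN size_modp_cmod. Qed.

Let size_modQ (p : {poly F}) : (size (p %% Q)%R <= m)%N.
Proof. exact: size_modp_cmod. Qed.

Lemma negacyclic_decomp :
  C = [set poly_rV ((e1 * rVpoly c1 + e2 * rVpoly c2) %% M) | c1 in R1, c2 in R2].
Proof.
apply/setP => c; apply/idP/imset2P => [cC|[u1 u2]].
  exists (poly_rV (rVpoly c %% P)) (poly_rV (rVpoly c %% Q)); try exact: imset_f.
  rewrite !poly_rV_K // modpD !modp_mul_mod // -modpD -mulrDl e1_add_e2 mul1r.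
  by rewrite modp_small ?rVpolyK // -cmodM size_XnsubC // ltnS size_poly.
rewrite Res_P_ideal Res_Q_ideal.
move=> /(ideal_genP _ m_gt0)[y ->] /(ideal_genP _ m_gt0)[z ->] ->.
rewrite cmodN !poly_rV_K ?size_modp_cmod // modpD !modp_mul_mod // -modpD.
apply/ideal_genP => //; exists (e1 * y + e2 * z).
by rewrite cmodM; congr (poly_rV (_ %% M)); ring.
Qed.

Lemma Res_P_is_gen_poly : is_gen_poly m (- lam) R1 (mgcd g P).
Proof. by rewrite Res_P_ideal -cmodN; apply: is_gen_poly_mgcd. Qed.

Lemma Res_Q_is_gen_poly : is_gen_poly m lam R2 (mgcd g Q).
Proof. by rewrite Res_Q_ideal; apply: is_gen_poly_mgcd. Qed.

Lemma Res_P_submod_closed : submod_closed R1.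
Proof. by rewrite Res_P_ideal; apply: ideal_gen_submod_closed. Qed.

Lemma Res_Q_submod_closed : submod_closed R2.
Proof. by rewrite Res_Q_ideal; apply: ideal_gen_submod_closed. Qed.

Lemma negacyclic_pm_code : C = pm_code (2^-1) (lam / 2) R1 R2.
Proof.
by rewrite {1}negacyclic_decomp; apply: eq_in_imset2 => u1 u2 _ _; apply: e1_e2_pm_word.
Qed.

Let lam_neq0 : lam != 0.
Proof. by apply: contra_eq_neq lam2 => ->; rewrite expr0n eq_sym oppr_eq0 oner_eq0. Qed.

Let half_neq0 : 2^-1 != 0 :> F. Proof. by rewrite invr_eq0. Qed.
Let half_lam_neq0 : lam / 2 != 0. Proof. by rewrite mulf_neq0. Qed.

Lemma cdim_negacyclic : cdim C = (cdim R1 + cdim R2)%N.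
Proof.
apply/eqP; rewrite -(eqn_exp2l _ _ (card_finNzRing_gt1 F)) expnD.
rewrite -(card_submod_closed (ideal_gen_submod_closed _ mm_gt0 g)).
rewrite -(card_submod_closed Res_P_submod_closed) -(card_submod_closed Res_Q_submod_closed).
by rewrite {1}negacyclic_pm_code card_pm_code.
Qed.

Lemma mindist_negacyclic_dvdQ : Q %| g -> mindist C = (2 * mindist R1)%N.
Proof.
move=> Q_g; rewrite {1}negacyclic_pm_code; apply: mindist_pm_code_zero2 => //.
by rewrite Res_Q_ideal; apply: ideal_gen_eq0.
Qed.

Lemma mindist_negacyclic_dvdP : P %| g -> mindist C = (2 * mindist R2)%N.
Proof.
move=> P_g; rewrite {1}negacyclic_pm_code; apply: mindist_pm_code_zero1 => //.
by rewrite Res_P_ideal ideal_gen_eq0 ?cmodN.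
Qed.

Local Notation d1 := (mindist R1).
Local Notation d2 := (mindist R2).

Lemma mindist_negacyclic_bounds :
  ((2 * minn d1 d2 <= maxn d1 d2)%N -> mindist C = (2 * minn d1 d2)%N) /\
  ((maxn d1 d2 < 2 * minn d1 d2)%N -> (maxn d1 d2 <= mindist C <= 2 * minn d1 d2)%N).
Proof.
have [R1_0 _] := Res_P_submod_closed; have [R2_0 _] := Res_Q_submod_closed.
have := mindist_pm_code_bounds half_neq0 half_lam_neq0 two_neq0 R1_0 R2_0.
by rewrite -negacyclic_pm_code.
Qed.

End NegacyclicDecomposition.

Theorem theorem7 (F : finFieldType) (n : nat) (lam : F)
  (C : {set 'rV[F]_n}) (g : {poly F}) :
  odd #|F| -> (#|F| %% 4 = 1)%N -> ~~ odd n -> (0 < n)%N -> coprime n #|F| ->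
  lam ^+ 2 = -1 ->
  is_gen_poly n (-1) C g ->
  let m := (n./2)%N in
  let e1 : {poly F} := (lam / 2)%:P * ('X^m - lam%:P) in
  let e2 : {poly F} := (- (lam / 2))%:P * ('X^m + lam%:P) in
  let R1 : {set 'rV[F]_m} := Res m ('X^m + lam%:P) C in
  let R2 : {set 'rV[F]_m} := Res m ('X^m - lam%:P) C in
  [/\ C = [set poly_rV ((e1 * rVpoly c1 + e2 * rVpoly c2) %% ('X^n + 1))
             | c1 in R1, c2 in R2],
      is_gen_poly m (- lam) R1 (mgcd g ('X^m + lam%:P)),
      is_gen_poly m lam R2 (mgcd g ('X^m - lam%:P)),
      cdim C = (cdim R1 + cdim R2)%N &
      [/\ ('X^m - lam%:P) %| g -> mindist C = (2 * mindist R1)%N,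
          ('X^m + lam%:P) %| g -> mindist C = (2 * mindist R2)%N &
          ~~ (('X^m - lam%:P) %| g) -> ~~ (('X^m + lam%:P) %| g) ->
          let d1 := mindist R1 in let d2 := mindist R2 in
          ((2 * minn d1 d2 <= maxn d1 d2)%N -> mindist C = (2 * minn d1 d2)%N) /\
          ((maxn d1 d2 < 2 * minn d1 d2)%N ->
             (maxn d1 d2 <= mindist C <= 2 * minn d1 d2)%N)]].
Proof.
move=> odd_F _ even_n n_gt0 _ lam2 [_ -> _] m.
have n_mm : n = (m + m)%N by rewrite addnn -[LHS]odd_double_half (negbTE even_n).
have m_gt0 : (0 < m)%N by move: n_gt0; rewrite n_mm addn_gt0 orbb.
clearbody m; subst n; have two_neq0 := odd_card_two_neq0 odd_F.
split.
- exact: negacyclic_decomp.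
- exact: Res_P_is_gen_poly.
- exact: Res_Q_is_gen_poly.
- exact: cdim_negacyclic.
(* The bounds of (6) hold without its non-divisibility hypotheses. *)
split=> [Q_g|P_g|_ _]; first exact: mindist_negacyclic_dvdQ.
  exact: mindist_negacyclic_dvdP.
exact: mindist_negacyclic_bounds.
Qed.
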